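(* Let $\Gamma=(V,E)$ be a graph, $M_v$ ($v\in V$) monoids, and $M=\Gamma_{v\in V}M_v$. Let $a\in M$, $v\in V$ and $c\in M_v$. Suppose $a$ has final $v$-component $d$ and final $v$-complement $a'$. Then $ac$ has final $v$-component $dc$ and final $v$-complement $a'$.
   Context: A graph $\Gamma=(V,E)$ has vertex set $V$ and irreflexive symmetric edge relation $E$. The graph product $M=\Gamma_{v\in V}M_v$ of pairwise disjoint monoids $M_v$ is the quotient of their free product by the congruence generated by $(mn,nm)$ for $m\in M_u$, $n\in M_v$, $(u,v)\in E$; each $M_v$ is identified with its image in $M$. Let $X$ be the disjoint union of the sets $M_v\setminus\{1\}$, and for $m\in M_v\setminus\{1\}$ set $C(m)=v$. A word $x_1\circ\cdots\circ x_n\in X^*$ is an expression for $x_1\cdots x_n\in M$; it is reduced if whenever $i<j$ and $C(x_i)=C(x_j)$ there is $k$ with $i<k<j$ and $(C(x_i),C(x_k))\notin E$. For $a,a'\in M$ and $c\in M_v\setminus\{1\}$: $a$ has final $v$-component $c$ and final $v$-complement $a'$ if $a$ has a reduced expression $a_1\circ\cdots\circ a_m\circ c$ with $a_1\cdots a_m=a'$; and $a$ has final $v$-component $1$ and final $v$-complement $a$ if $a$ has a reduced expression $a_1\circ\cdots\circ a_m$ such that either (i) $C(a_j)\ne v$ for all $j$, or (ii) there is $k$ with $(C(a_k),v)\notin E$ and $C(a_j)\ne v$ for all $j\ge k$. Each element has exactly one final $v$-component and one final $v$-complement. *)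

From Stdlib Require Import List Relations.
Import ListNotations.

Record Monoid := MkMonoid {
  mcar :> Type;
  mmul : mcar -> mcar -> mcar;
  mone : mcar;
  mmulA : forall x y z, mmul x (mmul y z) = mmul (mmul x y) z;
  mmul1l : forall x, mmul mone x = x;
  mmul1r : forall x, mmul x mone = x
}.

Section GraphProduct.
Variables (V : Type) (E : V -> V -> Prop) (Mv : V -> Monoid).

(** Letters: elements of the disjoint union of the M_v (identities included;
    the set X of the paper consists of the letters whose second component is
    not the identity). [C] is the colour (vertex) of a letter. *)
Definition letter := {v : V & Mv v}.
Definition C (x : letter) : V := projT1 x.
Definition nontriv (x : letter) : Prop := projT2 x <> mone (Mv (projT1 x)).

(** Defining relations of the graph product, presented on the free monoid on
    the disjoint union of the M_v:
    - the identity of M_v is the empty word (free product);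
    - two consecutive letters of M_v multiply (free product);
    - letters of adjacent vertices commute (graph product). *)
Inductive basic_rel : list letter -> list letter -> Prop :=
| br_one : forall v, basic_rel [existT _ v (mone (Mv v))] []
| br_mul : forall v (m n : Mv v),
    basic_rel [existT _ v m; existT _ v n] [existT _ v (mmul (Mv v) m n)]
| br_comm : forall u v (m : Mv u) (n : Mv v), E u v ->
    basic_rel [existT _ u m; existT _ v n] [existT _ v n; existT _ u m].

Definition one_step (w1 w2 : list letter) : Prop :=
  exists p q l r, w1 = p ++ l ++ q /\ w2 = p ++ r ++ q /\ basic_rel l r.

(** The congruence generated by the defining relations; the graph product M
    is the quotient of words by [geq].  A word is an expression for the
    element it represents. *)
Definition geq : list letter -> list letter -> Prop :=
  clos_refl_sym_trans _ one_step.

Definition reduced (w : list letter) : Prop :=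
  (forall x, In x w -> nontriv x) /\
  forall i j x y, i < j -> nth_error w i = Some x -> nth_error w j = Some y ->
    C x = C y ->
    exists k z, i < k /\ k < j /\ nth_error w k = Some z /\ ~ E (C x) (C z).

(** [final v a d a']: the element represented by [a] has final v-component [d]
    and final v-complement (the element represented by) [a']. *)
Definition final (v : V) (a : list letter) (d : Mv v) (a' : list letter) : Prop :=
  (d <> mone (Mv v) /\
     exists r, reduced (r ++ [existT _ v d]) /\ geq (r ++ [existT _ v d]) a
               /\ geq r a')
  \/
  (d = mone (Mv v) /\ geq a' a /\
     exists r, reduced r /\ geq r a /\
       ((forall x, In x r -> C x <> v) \/
        (exists k z, nth_error r k = Some z /\ ~ E (C z) v /\
           forall j y, k <= j -> nth_error r j = Some y -> C y <> v))).

End GraphProduct.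

(** If [a = r d] with [r d] reduced and [d] a nontrivial letter of [M_v], then
    [a c = r (d c)]; when [d c <> 1] the word [r (d c)] is still reduced, and
    when [d c = 1] the reducedness of [r d] says precisely that no letter of
    colour [v] in [r] can be shuffled to its end, so [a c = r] has final
    [v]-component [1].  Conversely, if the final [v]-component of [a] is [1],
    that same property of a reduced expression [r] of [a] makes [r c] reduced
    for nontrivial [c]. *)
From Stdlib Require Import List Relations Lia Classical PeanoNat.
Import ListNotations.

Lemma exists_last_index (P : nat -> Prop) (N : nat) :
  (forall j, P j -> j < N) -> (exists j, P j) ->
  exists m, P m /\ forall j, m < j -> ~ P j.
Proof.
  revert P; induction N as [|N IH]; intros P bounded [j Pj].
  - specialize (bounded j Pj); lia.
  - destruct (classic (P N)) as [PN|notPN].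
    + exists N; split; [exact PN|].
      intros k Hk Pk; specialize (bounded k Pk); lia.
    + apply IH; [|now exists j].
      intros k Pk; specialize (bounded k Pk).
      assert (k <> N) by (intros ->; contradiction); lia.
Qed.

Lemma nth_error_snoc {A : Type} (r : list A) (y z : A) (i : nat) :
  nth_error (r ++ [y]) i = Some z ->
  (i < length r /\ nth_error r i = Some z) \/ (i = length r /\ z = y).
Proof.
  intros Hz; destruct (Nat.lt_ge_cases i (length r)) as [Hi|Hi].
  - left; rewrite nth_error_app1 in Hz; auto.
  - right; rewrite nth_error_app2 in Hz by exact Hi.
    destruct (i - length r) as [|n] eqn:Hsub; simpl in Hz.
    + injection Hz as <-; split; [lia|reflexivity].
    + destruct n; discriminate.
Qed.

Section GraphProductWords.
Variables (V : Type) (E : V -> V -> Prop) (Mv : V -> Monoid).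

Notation letter := (letter V Mv).
Notation geq := (geq V E Mv).
Notation reduced := (reduced V E Mv).
Notation C := (C V Mv).

Lemma geq_app_r (x y s : list letter) : geq x y -> geq (x ++ s) (y ++ s).
Proof.
  induction 1 as [x y (p & q & l & r & -> & -> & Hrel)| | |].
  - apply rst_step; exists p, (q ++ s), l, r.
    rewrite <- !app_assoc; auto.
  - apply rst_refl.
  - now apply rst_sym.
  - eapply rst_trans; eauto.
Qed.

Lemma geq_snoc_mul (r : list letter) (v : V) (m n : Mv v) :
  geq (r ++ [existT _ v m] ++ [existT _ v n]) (r ++ [existT _ v (mmul (Mv v) m n)]).
Proof.
  apply rst_step.
  exists r, [], [existT _ v m; existT _ v n], [existT _ v (mmul (Mv v) m n)].
  rewrite !app_nil_r; repeat split; constructor.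
Qed.

Lemma geq_snoc_one (r : list letter) (v : V) :
  geq (r ++ [existT _ v (mone (Mv v))]) r.
Proof.
  apply rst_step; exists r, [], [existT _ v (mone (Mv v))], [].
  rewrite !app_nil_r; repeat split; constructor.
Qed.

Lemma geq_snoc_mul_r (r a : list letter) (v : V) (d c : Mv v) :
  geq (r ++ [existT _ v d]) a ->
  geq (r ++ [existT _ v (mmul (Mv v) d c)]) (a ++ [existT _ v c]).
Proof.
  intros Hra; eapply rst_trans; [apply rst_sym, geq_snoc_mul|].
  rewrite app_assoc; now apply geq_app_r.
Qed.

Lemma reduced_app_l (r s : list letter) : reduced (r ++ s) -> reduced r.
Proof.
  intros [Hnontriv Hsep]; split.
  - intros x Hx; apply Hnontriv, in_or_app; auto.
  - intros i j x y Hij Hx Hy Hxy.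
    assert (Hj : j < length r) by (apply nth_error_Some; congruence).
    destruct (Hsep i j x y Hij) as (k & z & Hik & Hkj & Hz & HE);
      try rewrite nth_error_app1; auto; try lia.
    exists k, z; rewrite nth_error_app1 in Hz by lia; auto.
Qed.

Lemma reduced_snoc_replace (r : list letter) (x y : letter) :
  reduced (r ++ [x]) -> C x = C y -> nontriv V Mv y -> reduced (r ++ [y]).
Proof.
  intros [Hnontriv Hsep] Hxy Hy; split.
  - intros z Hz; apply in_app_or in Hz as [Hz|[<-|[]]]; auto.
    apply Hnontriv, in_or_app; auto.
  - intros i j a b Hij Ha Hb Hab.
    apply nth_error_snoc in Ha as [[Hi Ha]|[-> _]];
      [|apply nth_error_snoc in Hb as [[? _]|[? _]]; lia].
    assert (Ha' : nth_error (r ++ [x]) i = Some a) by (rewrite nth_error_app1; auto).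
    apply nth_error_snoc in Hb as [[Hj Hb]|[-> ->]].
    + destruct (Hsep i j a b Hij Ha') as (k & z & Hik & Hkj & Hz & HE);
        try rewrite nth_error_app1; auto.
      exists k, z; rewrite nth_error_app1 in Hz |- * by lia; auto.
    + destruct (Hsep i (length r) a x Hij Ha') as (k & z & Hik & Hkj & Hz & HE).
      { rewrite nth_error_app2, Nat.sub_diag; auto. }
      { congruence. }
      exists k, z; rewrite nth_error_app1 in Hz |- * by lia; auto.
Qed.

(** No letter of colour [v] in [r] can be shuffled to the end of [r]: this is
    the disjunction (i) or (ii) in the definition of final [v]-component [1]. *)
Definition no_trailing (v : V) (r : list letter) : Prop :=
  (forall x, In x r -> C x <> v) \/
  (exists k z, nth_error r k = Some z /\ ~ E (C z) v /\
     forall j y, k <= j -> nth_error r j = Some y -> C y <> v).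

Hypothesis E_irrefl : forall u, ~ E u u.
Hypothesis E_sym : forall u w, E u w -> E w u.

Lemma reduced_snoc_no_trailing (r : list letter) (x : letter) :
  reduced (r ++ [x]) -> no_trailing (C x) r.
Proof.
  intros Hred.
  set (blocks j := exists z, nth_error r j = Some z /\ ~ E (C z) (C x)).
  destruct (classic (exists j, blocks j)) as [Hblock|Hnoblock].
  - right.
    destruct (exists_last_index blocks (length r)) as (m & (z & Hz & HzE) & Hlast);
      auto.
    { intros j (z & Hz & _); apply nth_error_Some; congruence. }
    exists m, z; repeat split; auto.
    intros j y Hmj Hy Hyx.
    destruct (Nat.eq_dec j m) as [->|Hne].
    + rewrite Hz in Hy; injection Hy as <-.
      assert (Hm : m < length r) by (apply nth_error_Some; congruence).
      destruct (proj2 Hred m (length r) z x Hm) as (k & z' & Hmk & Hk & Hz' & HE);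
        auto.
      { rewrite nth_error_app1; auto. }
      { rewrite nth_error_app2, Nat.sub_diag; auto. }
      rewrite nth_error_app1 in Hz' by lia.
      apply (Hlast k Hmk); exists z'; rewrite <- Hyx; auto.
    + apply (Hlast j); [lia|].
      exists y; split; auto; rewrite Hyx; apply E_irrefl.
  - left; intros y Hy Hyx; apply Hnoblock.
    destruct (In_nth_error _ _ Hy) as [j Hj].
    exists j, y; split; auto; rewrite Hyx; apply E_irrefl.
Qed.

Lemma reduced_snoc_of_no_trailing (r : list letter) (x : letter) :
  reduced r -> nontriv V Mv x -> no_trailing (C x) r -> reduced (r ++ [x]).
Proof.
  intros [Hnontriv Hsep] Hx Htrail; split.
  - intros z Hz; apply in_app_or in Hz as [Hz|[<-|[]]]; auto.
  - intros i j a b Hij Ha Hb Hab.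
    apply nth_error_snoc in Ha as [[Hi Ha]|[-> _]];
      [|apply nth_error_snoc in Hb as [[? _]|[? _]]; lia].
    apply nth_error_snoc in Hb as [[Hj Hb]|[-> ->]].
    + destruct (Hsep i j a b Hij Ha Hb Hab) as (k & z & Hik & Hkj & Hz & HE).
      exists k, z; rewrite nth_error_app1 by lia; auto.
    + destruct Htrail as [Hnone|(k & z & Hz & HzE & Hafter)].
      { exfalso; apply (Hnone a); auto; eapply nth_error_In; eauto. }
      assert (Hik : i < k).
      { destruct (Nat.lt_ge_cases i k) as [?|Hki]; auto.
        exfalso; apply (Hafter i a Hki Ha Hab). }
      assert (Hk : k < length r) by (apply nth_error_Some; congruence).
      exists k, z; rewrite nth_error_app1 by exact Hk.
      repeat split; auto.
      rewrite Hab; intros HE; apply HzE, E_sym, HE.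
Qed.

End GraphProductWords.

Theorem lemma1p4 (V : Type) (E : V -> V -> Prop)
  (E_irrefl : forall u, ~ E u u) (E_sym : forall u w, E u w -> E w u)
  (Mv : V -> Monoid) (a : list (letter V Mv)) (v : V) (c : Mv v)
  (d : Mv v) (a' : list (letter V Mv)) :
  final V E Mv v a d a' ->
  final V E Mv v (a ++ [existT _ v c]) (mmul (Mv v) d c) a'.
Proof.
  intros [[Hd (r & Hred & Hra & Hra')]|[-> (Ha'a & r & Hred & Hra & Htrail)]].
  - pose proof (geq_snoc_mul_r V E Mv r a v d c Hra) as Hrdc.
    destruct (classic (mmul (Mv v) d c = mone (Mv v))) as [Hdc|Hdc].
    + assert (Hr : geq V E Mv r (a ++ [existT _ v c])).
      { eapply rst_trans; [|exact Hrdc].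
        rewrite Hdc; apply rst_sym, geq_snoc_one. }
      right; split; [exact Hdc|split].
      * eapply rst_trans; [apply rst_sym|]; eassumption.
      * exists r; split; [eapply reduced_app_l; eassumption|split; [exact Hr|]].
        exact (reduced_snoc_no_trailing V E Mv E_irrefl E_sym r _ Hred).
    + left; split; [exact Hdc|exists r; split; [|split; assumption]].
      eapply reduced_snoc_replace; eauto.
  - rewrite mmul1l.
    destruct (classic (c = mone (Mv v))) as [->|Hc].
    + right; split; [reflexivity|split].
      * eapply rst_trans; [exact Ha'a|apply rst_sym, geq_snoc_one].
      * exists r; split; [exact Hred|split; [|exact Htrail]].
        eapply rst_trans; [exact Hra|apply rst_sym, geq_snoc_one].
    + left; split; [exact Hc|exists r; split; [|split]].
      * now apply reduced_snoc_of_no_trailing.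
      * now apply geq_app_r.
      * eapply rst_trans; [exact Hra|apply rst_sym; exact Ha'a].
Qed.
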